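(* Let $G$ be a finite group and let $C(G)^*$ denote the set of non-trivial cyclic subgroups of $G$. Suppose that $m_G(H_1)=m_G(H_2)$ for all $H_1,H_2\in C(G)^*$. Then $G$ is a $p$-group for some prime $p$, every element of order $p$ of $G$ is central (i.e. $\Omega_1(G)\leq Z(G)$), and in fact $\Omega_1(G)=Z(G)$. Moreover, if $|G|=p^n$, $\exp(G)=p^m$ and $|Z(G)|=p^k$, then $k\leq n-2m+2$.
   Context: For a finite group $G$ and a subgroup $H\leq G$, the Chermak-Delgado measure of $H$ in $G$ is $m_G(H)=|H|\,|C_G(H)|$, where $C_G(H)$ is the centralizer of $H$ in $G$. For a $p$-group $G$, $\Omega_1(G)$ denotes the subgroup generated by all elements of order $p$ in $G$, and $Z(G)$ is the center of $G$. *)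

From mathcomp Require Import all_boot all_fingroup all_solvable.
Set Implicit Arguments. Unset Strict Implicit. Unset Printing Implicit Defensive.
Local Open Scope group_scope.

Definition CDmeasure (gT : finGroupType) (G H : {set gT}) : nat :=
  (#|H| * #|'C_G(H)|)%N.

From mathcomp Require Import all_boot all_fingroup all_solvable.
Set Implicit Arguments.
Unset Strict Implicit.
Unset Printing Implicit Defensive.

Local Open Scope group_scope.

(** If all non-trivial cyclic subgroups have the same measure, comparing a
    central element of order [p] of a Sylow [p]-subgroup with an element of any
    other prime order shows that [G] is a [p]-group. A central element [z] of
    order [p] then has measure [p * |G|], so every [x <> 1] satisfies
    [#[x] * |C_G(x)| = p * |G|]: central elements have order [p], and elements
    of order [p] have full centralizer, whence [Omega_1(G) = Z(G)]. For [g] of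
    maximal order [p^m], the product [<g> Z(G)] lies in [C_G(g)] of order
    [p^(n+1-m)] and meets [Z(G)] in at most [p] elements, which gives
    [p^(m+k-1) <= p^(n+1-m)]. *)

Lemma CDmeasure_cycle (gT : finGroupType) (G : {group gT}) (x : gT) :
  CDmeasure G <[x]> = (#[x] * #|'C_G[x]|)%N.
Proof. by rewrite /CDmeasure cent_cycle. Qed.

Lemma logn_cycle_measure_prime_order (gT : finGroupType) (G : {group gT})
    (p q : nat) (x : gT) :
  prime q -> q != p -> #[x] = q ->
  (logn p (#[x] * #|'C_G[x]|) <= logn p #|G|)%N.
Proof.
move=> q_pr nqp ox; rewrite ox lognM ?cardG_gt0 ?prime_gt0 //.
rewrite (logn_prime p q_pr) eq_sym (negPf nqp) add0n.
by rewrite dvdn_leq_log ?cardG_gt0 ?cardSg ?subcent1_sub.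
Qed.

Lemma logn_cycle_measure_Sylow_center (gT : finGroupType) (G P : {group gT})
    (p : nat) (x : gT) :
  prime p -> p.-Sylow(G) P -> x \in 'Z(P) -> #[x] = p ->
  (logn p #|G| < logn p (#[x] * #|'C_G[x]|))%N.
Proof.
move=> p_pr sylP ZPx ox; have sPG := pHall_sub sylP.
have sPC : P \subset 'C_G[x].
  by rewrite subsetI sPG sub_cent1; case/setIP: ZPx.
rewrite ox lognM ?cardG_gt0 ?prime_gt0 // (logn_prime p p_pr) eqxx ltnS.
by rewrite -logn_part -(card_Hall sylP) dvdn_leq_log ?cardSg.
Qed.

Section ConstantCyclicMeasure.

Variables (gT : finGroupType) (G : {group gT}).

Hypothesis CDmeasure_cycle_const :
  {in G^# &, forall x y, CDmeasure G <[x]> = CDmeasure G <[y]>}.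

Let in_setD1G x : x \in G -> x != 1 -> x \in G^#.
Proof. by move=> Gx ntx; apply/setD1P. Qed.

Let in_setD1G_prime_order x : x \in G -> prime #[x] -> x \in G^#.
Proof. by move=> Gx /prime_gt1; rewrite order_gt1; apply: in_setD1G. Qed.

Let cycle_measure_eq x y : x \in G^# -> y \in G^# ->
  (#[x] * #|'C_G[x]| = #[y] * #|'C_G[y]|)%N.
Proof. by move=> Gx Gy; rewrite -!CDmeasure_cycle; exact: CDmeasure_cycle_const. Qed.

Lemma constant_cycle_measure_pgroup : exists p, prime p /\ p.-group G.
Proof.
have [-> | ntG] := eqsVneq G 1; first by exists 2; rewrite pgroup1.
set p := pdiv #|G|; have p_pr : prime p by rewrite pdiv_prime ?cardG_gt1.
exists p; split=> //; apply/pgroupP => q q_pr qG; rewrite inE /=.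
apply: contraT => nqp.
have [P sylP] := Sylow_exists p G; have pP := pHall_pgroup sylP.
have ntP : P :!=: 1.
  rewrite -cardG_gt1 (card_Hall sylP) p_part_gt1 mem_primes p_pr cardG_gt0.
  exact: pdiv_dvd.
have ntZP : 'Z(P) != 1 by rewrite center_nil_eq1 ?(pgroup_nil pP).
have [_ pZP _] := pgroup_pdiv (pgroupS (center_sub P) pP) ntZP.
have [x ZPx ox] := Cauchy p_pr pZP; have [y Gy oy] := Cauchy q_pr qG.
have Gx : x \in G^#.
  rewrite in_setD1G_prime_order ?ox // (subsetP (pHall_sub sylP)) //.
  exact: (subsetP (center_sub P)).
have Gy' : y \in G^# by rewrite in_setD1G_prime_order ?oy.
have := logn_cycle_measure_Sylow_center p_pr sylP ZPx ox.
rewrite (cycle_measure_eq Gx Gy') ltnNge.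
by rewrite (logn_cycle_measure_prime_order G q_pr nqp oy).
Qed.

Variable p : nat.
Hypotheses (p_pr : prime p) (pG : p.-group G).

Lemma cycle_measure_pgroup x : x \in G^# -> (#[x] * #|'C_G[x]| = p * #|G|)%N.
Proof.
move=> Gx; have ntG : G :!=: 1.
  by apply: contraTneq Gx => ->; rewrite setDv inE.
have ntZ : 'Z(G) != 1 by rewrite center_nil_eq1 ?(pgroup_nil pG).
have [_ pZ _] := pgroup_pdiv (pgroupS (center_sub G) pG) ntZ.
have [z Zz oz] := Cauchy p_pr pZ.
have /setIP[Gz cGz] := Zz.
have {}Gz : z \in G^# by rewrite in_setD1G_prime_order ?oz.
have CGz : 'C_G[z] = G by apply/setIidPl; rewrite sub_cent1.
by rewrite (cycle_measure_eq Gx Gz) oz CGz.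
Qed.

Lemma center_expg_prime x : x \in 'Z(G) -> x ^+ p = 1.
Proof.
move=> Zx; have [-> | ntx] := eqVneq x 1; first exact: expg1n.
have /setIP[Gx cGx] := Zx.
have CGx : 'C_G[x] = G by apply/setIidPl; rewrite sub_cent1.
have /eqP := cycle_measure_pgroup (in_setD1G Gx ntx); rewrite CGx.
by rewrite eqn_pmul2r ?cardG_gt0 // => /eqP <-; rewrite expg_order.
Qed.

Lemma expg_prime_central x : x \in G -> x ^+ p = 1 -> x \in 'Z(G).
Proof.
move=> Gx xp; have [-> | ntx] := eqVneq x 1; first exact: group1.
have ox : #[x] = p.
  apply/prime_nt_dvdP; rewrite ?order_eq1 //.
  by rewrite order_dvdn xp.
have /eqP := cycle_measure_pgroup (in_setD1G Gx ntx).
rewrite ox eqn_pmul2l ?prime_gt0 // => /eqP CGx.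
have {}CGx : 'C_G[x] = G by apply/eqP; rewrite eqEcard subcent1_sub CGx leqnn.
by apply/setIP; split; rewrite // -sub_cent1 -CGx subsetIr.
Qed.

Lemma Ohm1_constant_cycle_measure : 'Ohm_1(G) = 'Z(G).
Proof.
apply/eqP; rewrite eqEsubset (OhmE 1 pG) gen_subG; apply/andP; split.
  by apply/subsetP => x /LdivP[Gx]; rewrite expn1; apply: expg_prime_central.
apply/subsetP => x Zx; rewrite mem_gen //; apply/LdivP.
by rewrite expn1 center_expg_prime // (subsetP (center_sub G)).
Qed.

Lemma exponent_center_bound :
  (exponent G ^ 2 * #|'Z(G)| <= p ^ 2 * #|G|)%N.
Proof.
have [-> | ntG] := eqsVneq G 1.
  by rewrite exponent1 center1 cards1 exp1n !muln1 expn_gt0 prime_gt0.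
have [g Gg eg] := exponent_witness (pgroup_nil pG).
have Gg' : g \in G^#.
  by apply: in_setD1G Gg (contra _ ntG) => /eqP g1; rewrite trivg_exponent eg g1 order1.
have sZC : 'Z(G) \subset 'C_G[g].
  by rewrite subsetI center_sub sub_cent1 (subsetP _ g Gg) // centsC subsetIr.
have sgZC : <[g]> * 'Z(G) \subset 'C_G[g] by rewrite mul_subG ?subcent1_cycle_sub.
have gZ_le_p : (#|<[g]> :&: 'Z(G)| <= p)%N.
  have [h defgZ] := cyclicP (cyclicS (subsetIl _ 'Z(G)) (cycle_cyclic g)).
  have /setIP[_ Zh] : h \in <[g]> :&: 'Z(G) by rewrite defgZ cycle_id.
  by rewrite defgZ dvdn_leq ?prime_gt0 // order_dvdn center_expg_prime.
rewrite !expnS !expn0 !muln1 -!mulnA -(cycle_measure_pgroup Gg') -eg.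
rewrite [leqRHS]mulnCA leq_mul // eg (mul_cardG <[g]> 'Z(G)) mulnC.
by rewrite leq_mul ?subset_leq_card.
Qed.

End ConstantCyclicMeasure.

Theorem theorem1p1 (gT : finGroupType) (G : {group gT}) :
  (forall H1 H2 : {group gT},
      H1 \subset G -> cyclic H1 -> H1 :!=: 1 ->
      H2 \subset G -> cyclic H2 -> H2 :!=: 1 ->
      CDmeasure G H1 = CDmeasure G H2) ->
  exists p : nat,
    [/\ prime p, p.-group G,
        'Ohm_1(G) \subset 'Z(G),
        'Ohm_1(G) = 'Z(G) &
        forall n m k : nat,
          #|G| = (p ^ n)%N -> exponent G = (p ^ m)%N -> #|'Z(G)| = (p ^ k)%N ->
          (k + 2 * m <= n + 2)%N].
Proof.
move=> CDmeasure_const.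
have cycle_const : {in G^# &, forall x y, CDmeasure G <[x]> = CDmeasure G <[y]>}.
  move=> x y /setD1P[ntx Gx] /setD1P[nty Gy].
  by apply: CDmeasure_const; rewrite ?cycle_subG ?cycle_cyclic ?cycle_eq1.
have [p [p_pr pG]] := constant_cycle_measure_pgroup cycle_const.
have OZ := Ohm1_constant_cycle_measure cycle_const p_pr pG.
exists p; split; rewrite ?OZ //.
move=> n m k oG eG oZ; rewrite -(leq_exp2l _ _ (prime_gt1 p_pr)).
rewrite expnD (mulnC 2) expnM mulnC expnD [leqRHS]mulnC -oG -eG -oZ.
exact: (exponent_center_bound (G := G) cycle_const p_pr pG).
Qed.
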